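(* Let $\alpha>-1$, let $\hat L^\alpha_n$ be the monic Laguerre polynomials, and let $(\rho_n)_{n\ge0}$ be positive real numbers such that for some $\nu>0$ $$\frac{\rho_{n-1}}{\rho_n}\le\nu,\quad n\ge1.$$ Let $K$ be a positive integer and $\gamma_0,\dots,\gamma_K$ real numbers with $\gamma_0=1$, $\gamma_K\neq0$. Then the polynomial $$q_n(x)=\sum_{j=0}^K\gamma_j\rho_{n-j}\hat L^\alpha_{n-j}(x)$$ has only real and simple zeros for $$n\ge\max\left\{\frac18\left(23\nu\,2^{K-1}\frac{(23\nu)^{K-1}-1}{23\nu-1}\Gamma_2-2|\alpha|\right),\ \frac{\nu-\alpha+1}{2},\ \alpha+9,\ 2K\right\},$$ where $\Gamma_2=\max\{|\gamma_j|:2\le j\le K\}$, and these zeros interlace the zeros of $L^\alpha_{n-1}$. Moreover, for $n$ sufficiently large all the zeros of $q_n$ are positive.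
   Context: $L^\alpha_n$ is the Laguerre polynomial of degree $n$, orthogonal with respect to $x^\alpha e^{-x}dx$ on $(0,\infty)$, and $\hat L^\alpha_n=(-1)^nn!L^\alpha_n$ is its monic version; they satisfy $x\hat L^\alpha_n=\hat L^\alpha_{n+1}+(2n+\alpha+1)\hat L^\alpha_n+n(n+\alpha)\hat L^\alpha_{n-1}$. When $23\nu=1$ the quotient $\frac{(23\nu)^{K-1}-1}{23\nu-1}$ is read as $\sum_{j=0}^{K-2}(23\nu)^j$. Interlacing: given two finite sets $U,V$ of reals, $U$ interlaces $V$ if $\min U<\min V$ and between any two consecutive elements of either set there is an element of the other; here $U$ is the zero set of $q_n$ and $V$ that of $L^\alpha_{n-1}$. *)

From HB Require Import structures.
From mathcomp Require Import all_boot all_order all_algebra.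
From mathcomp Require Import reals.
Set Implicit Arguments. Unset Strict Implicit. Unset Printing Implicit Defensive.
Import Order.TTheory GRing.Theory Num.Theory.
Local Open Scope ring_scope.

(* Monic Laguerre polynomials \hat L^alpha_n, defined by the three-term
   recurrence  x L_n = L_{n+1} + (2n+alpha+1) L_n + n(n+alpha) L_{n-1},
   with L_0 = 1, L_1 = x - (alpha+1). *)
Fixpoint hatL_pair {R : realType} (alpha : R) (n : nat) : {poly R} * {poly R} :=
  match n with
  | 0%N => (1, 'X - (alpha + 1)%:P)
  | k.+1 => let: (p0, p1) := hatL_pair alpha k in
            (p1, ('X - (2 * k.+1%:R + alpha + 1)%:P) * p1
                   - (k.+1%:R * (k.+1%:R + alpha)) *: p0)
  end.

Definition hatL {R : realType} (alpha : R) (n : nat) : {poly R} :=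
  (hatL_pair alpha n).1.

Definition Lag {R : realType} (alpha : R) (n : nat) : {poly R} :=
  ((-1) ^+ n / (n`!)%:R) *: hatL alpha n.

(* ((c)^(K-1) - 1)/(c - 1), read as sum_{j=0}^{K-2} c^j when c = 1 *)
Definition geomq {R : realType} (c : R) (K : nat) : R :=
  if c == 1 then \sum_(j < K.-1) c ^+ j else (c ^+ K.-1 - 1) / (c - 1).

Definition Gamma2 {R : realType} (gamma : nat -> R) (K : nat) : R :=
  \big[Num.max/0]_(2 <= j < K.+1) `|gamma j|.

Definition lag_comb {R : realType} (alpha : R) (rho gamma : nat -> R) (K n : nat)
  : {poly R} :=
  \sum_(0 <= j < K.+1) (gamma j * rho (n - j)%N) *: hatL alpha (n - j)%N.

Definition real_simple_zeros {R : realType} (p : {poly R}) : Prop :=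
  p != 0 /\ exists s : seq R,
    sorted <%R s /\ p = lead_coef p *: \prod_(x <- s) ('X - x%:P).

Definition consec_between {R : realType} (U V : R -> Prop) : Prop :=
  forall u1 u2, U u1 -> U u2 -> u1 < u2 ->
    (forall u, U u -> ~ (u1 < u /\ u < u2)) ->
    exists v, V v /\ u1 < v /\ v < u2.

Definition interlaces {R : realType} (U V : R -> Prop) : Prop :=
  (exists u v, U u /\ (forall u', U u' -> u <= u') /\
               V v /\ (forall v', V v' -> v <= v') /\ u < v)
  /\ consec_between U V /\ consec_between V U.

Definition zeros {R : realType} (p : {poly R}) : R -> Prop := fun x => root p x.

From HB Require Import structures.
From mathcomp Require Import all_boot all_order all_algebra.
From mathcomp Require Import reals boolp polyrcf.
From mathcomp Require Import ring lra zify.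
Import Order.TTheory GRing.Theory Num.Theory.
Local Open Scope ring_scope.

Set Implicit Arguments. Unset Strict Implicit. Unset Printing Implicit Defensive.

(* The zeros y_1 < ... < y_(n-1) of L_(n-1) (monic Laguerre) are real and simple and
   interlace those of L_n, so L_n alternates in sign along them; there the recurrence
   gives L_n(y) = -a_(n-1) L_(n-2)(y) with a_k = k (k + alpha).  Running the recurrence
   downward from L_(n-1)(y) = 0 bounds |L_(n-j)(y)| by 23^(j-2) |L_(n-2)(y)|, and
   rho_(n-j) <= nu^j rho_n, so the part of q_n(y) beyond its first two terms is at most
   Gamma_2 nu^2 (sum_j (23 nu)^(j-2)) rho_n |L_(n-2)(y)|; the lower bounds on n make this
   smaller than rho_n |L_n(y)|.  Hence q_n, of degree n with leading coefficient rho_n,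
   alternates in sign along the y_i too, and together with its signs near -oo and +oo
   the intermediate value theorem puts one zero in each of the n gaps.
   For positivity: at x <= 0 the numbers (-1)^k L_k(x) are positive and grow at least by
   the factor k + alpha at each step, so for large n the term rho_n L_n(x) dominates. *)

Section SignPatterns.
Variable R : realDomainType.
Implicit Types (x a b c : R) (y z : nat -> R).

Definition increasing_on (m : nat) (z : nat -> R) :=
  forall i, (i.+1 < m)%N -> z i < z i.+1.

Definition interlaced (m : nat) (z y : nat -> R) :=
  forall i, (i < m)%N -> z i < y i < z i.+1.

Lemma increasing_on_lt m z i j :
  increasing_on m z -> (i < j)%N -> (j < m)%N -> z i < z j.
Proof.
move=> zinc ij jm; have im := ltn_trans ij jm.
apply: (Order.NatMonotonyTheory.homo_ltn_lt_in (D := [pred k | k < m]%N)) => //.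
- by move=> a b _ /= bm c /andP[_ /ltn_trans]; apply.
- by move=> k _ /= km; apply: zinc.
Qed.

Lemma increasing_on_le m z i j :
  increasing_on m z -> (i <= j)%N -> (j < m)%N -> z i <= z j.
Proof.
move=> zinc; rewrite leq_eqVlt => /orP[/eqP-> //|ij] jm.
exact/ltW/(increasing_on_lt zinc).
Qed.

Lemma interlaced_increasing_outer m z y :
  interlaced m z y -> increasing_on m.+1 z.
Proof. by move=> zy i /zy /andP[/lt_trans]; apply. Qed.

Lemma interlaced_increasing_inner m z y :
  interlaced m z y -> increasing_on m y.
Proof.
move=> zy i im; have /andP[_ lt1] := zy i (ltnW im).
by have /andP[lt2 _] := zy i.+1 im; apply: lt_trans lt2.
Qed.

Lemma sorted_mkseq m z : increasing_on m z -> sorted <%R (mkseq z m).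
Proof.
move=> zinc; apply: (homo_sorted_in (P := [pred i | i < m]%N) (e := ltn)).
- by move=> i j /= im jm ij; apply: increasing_on_lt zinc ij jm.
- by apply/allP => i; rewrite mem_iota.
- exact: iota_ltn_sorted.
Qed.

Lemma signrM_gt0_sgr x k : Num.sg x = (-1) ^+ k -> 0 < (-1) ^+ k * x.
Proof.
move=> sgx; rewrite -sgx -normrEsg normr_gt0 -sgr_eq0 sgx.
by rewrite signr_eq0.
Qed.

Lemma signr_prod_subr_gt0 z x k j : (j <= k)%N ->
  (forall i, (i < j)%N -> z i < x) ->
  (forall i, (j <= i < k)%N -> x < z i) ->
  0 < (-1) ^+ (k - j) * \prod_(0 <= i < k) (x - z i).
Proof.
move=> jk below above.
rewrite (big_cat_nat (leq0n j) jk) /=.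
under [X in _ * (_ * X)]eq_bigr do rewrite -opprB -mulN1r.
rewrite big_split prodr_const_nat /= mulrCA signrMK.
apply: mulr_gt0; rewrite big_nat_cond;
  apply: prodr_gt0 => i /andP[/andP[ji ik] _]; rewrite subr_gt0.
  exact: below.
by apply: above; rewrite ji.
Qed.

Lemma signrM_gt0_approx k a b c :
  0 < (-1) ^+ k * a -> `|b - c * a| < c * `|a| -> 0 < (-1) ^+ k * b.
Proof.
move=> sa near.
have sa_norm : (-1) ^+ k * a = `|a|.
  by rewrite -[LHS]gtr0_norm // normrM normr_sign mul1r.
have near' : `|(-1) ^+ k * (b - c * a)| < c * `|a|.
  by rewrite normrM normr_sign mul1r.
have -> : (-1) ^+ k * b = c * `|a| + (-1) ^+ k * (b - c * a).
  by rewrite -sa_norm; ring.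
have := ltrNnormlW near'; lra.
Qed.

End SignPatterns.

Section AlternatingRoots.
Variable R : rcfType.
Implicit Types (P : {poly R}) (e y z : nat -> R).

Lemma horner_prod_XsubC_mkseq z m t :
  (\prod_(x <- mkseq z m) ('X - x%:P)).[t] = \prod_(0 <= i < m) (t - z i).
Proof.
rewrite horner_prod big_map /index_iota subn0.
by apply: eq_bigr => i _; rewrite hornerXsubC.
Qed.

Lemma poly_gt0_right_of P a : 0 < lead_coef P -> exists2 x, a < x & 0 < P.[x].
Proof.
move=> lcP; have P0 : P != 0 by rewrite -lead_coef_eq0 gt_eqF.
exists (Num.max (cauchy_bound P) (a + 1)); first by rewrite lt_max ltrDl ltr01 orbT.
rewrite -sgr_cp0 (sgp_pinftyP (ge_cauchy_bound P0)) ?in_itv /= ?le_max ?lexx //.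
by rewrite /sgp_pinfty gtr0_sg.
Qed.

Lemma poly_sign_left_of P a : 0 < lead_coef P ->
  exists2 x, x < a & 0 < (-1) ^+ (size P).-1 * P.[x].
Proof.
move=> lcP; have P0 : P != 0 by rewrite -lead_coef_eq0 gt_eqF.
exists (Num.min (- cauchy_bound P) (a - 1)); first by rewrite gt_min gtrBl ltr01 orbT.
apply: signrM_gt0_sgr.
rewrite (sgp_minftyP (le_cauchy_bound P0)) ?in_itv /= ?ge_min ?lexx //.
by rewrite /sgp_minfty sgrM (gtr0_sg lcP) mulr1 sgrX sgrN sgr1.
Qed.

Lemma alternating_roots P e k :
  (forall i, (i < k)%N -> e i < e i.+1) ->
  (forall i, (i <= k)%N -> 0 < (-1) ^+ (k - i) * P.[e i]) ->
  exists z, forall i, (i < k)%N -> e i < z i < e i.+1 /\ root P (z i).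
Proof.
move=> einc esg.
have ex i : exists x, (i < k)%N ==> [&& e i < x, x < e i.+1 & root P x].
  have [ik|_] := ltnP i k; last by exists 0.
  have sign_change : P.[e i] * P.[e i.+1] < 0.
    have := mulr_gt0 (esg i (ltnW ik)) (esg i.+1 ik).
    have -> : (k - i = (k - i.+1).+1)%N by lia.
    rewrite exprS; set s := (-1) ^+ (k - i.+1); rewrite -oppr_gt0.
    have -> : -1 * s * P.[e i] * (s * P.[e i.+1]) =
              s ^+ 2 * - (P.[e i] * P.[e i.+1]) by ring.
    by rewrite sqrr_sign mul1r.
  have [x] := poly_ivtoo (ltW (einc i ik)) sign_change.
  by rewrite in_itv /= => /andP[lo hi] r; exists x; rewrite lo hi r.
exists (fun i => xchoose (ex i)) => i ik.
by have /implyP/(_ ik)/and3P[-> -> ->] := xchooseP (ex i).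
Qed.

Lemma interlacing_roots P m y :
  increasing_on m y -> size P = m.+2 -> 0 < lead_coef P ->
  (forall i, (i < m)%N -> 0 < (-1) ^+ (m - i) * P.[y i]) ->
  exists z, interlaced m z y /\
            P = lead_coef P *: \prod_(x <- mkseq z m.+1) ('X - x%:P).
Proof.
move=> yinc sP lcP ysg.
have y0_le : y 0%N <= y m.-1.
  by case: m yinc {sP ysg} => // m yinc; apply: increasing_on_le yinc _ _.
have [lo lo_lt lo_sg] := poly_sign_left_of (y 0%N) lcP.
have [hi hi_gt hi_sg] := poly_gt0_right_of (y m.-1) lcP.
have lo_hi : lo < hi := lt_trans lo_lt (le_lt_trans y0_le hi_gt).
(* P alternates in sign along lo, y_0, ..., y_(m-1), hi. *)
pose e i := if i is j.+1 then if (j < m)%N then y j else hi else lo.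
have einc i : (i < m.+1)%N -> e i < e i.+1.
  case: i => [|i] /= im; first by case: ifP.
  rewrite ltnS in im; rewrite im; case: ifPn => [/yinc//|]; rewrite -leqNgt => mi.
  by have -> : i = m.-1 by lia.
have esg i : (i <= m.+1)%N -> 0 < (-1) ^+ (m.+1 - i) * P.[e i].
  case: i => [|i] /= im; first by rewrite subn0; rewrite sP in lo_sg.
  rewrite subSS; case: ifPn => [/ysg//|]; rewrite -leqNgt => mi.
  have -> : i = m by lia.
  by rewrite subnn expr0 mul1r.
have [z zP] := alternating_roots einc esg.
have zy : interlaced m z y.
  move=> i im; have [/andP[_ lt1] _] := zP i (ltnW im).
  by have [/andP[lt2 _] _] := zP i.+1 im; rewrite /= im in lt1 lt2; rewrite lt1 lt2.
exists z; split => //; apply: all_roots_prod_XsubC.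
- by rewrite size_mkseq sP.
- by apply/allP => x /mapP[i]; rewrite mem_iota => /andP[_ /zP[_ r]] ->.
- rewrite uniq_rootsE; apply: lt_sorted_uniq.
  exact/sorted_mkseq/interlaced_increasing_outer/zy.
Qed.

End AlternatingRoots.

Section Interlacing.
Variable R : realType.
Implicit Types (P Q : {poly R}) (y z : nat -> R).

Definition values (m : nat) (z : nat -> R) : R -> Prop :=
  fun x => exists2 i, (i < m)%N & x = z i.

Lemma zerosZ c P : c != 0 -> zeros (c *: P) = zeros P.
Proof. by move=> c0; apply/funext => x; rewrite /zeros rootZ. Qed.

Lemma zeros_prod_XsubC m z :
  zeros (\prod_(x <- mkseq z m) ('X - x%:P)) = values m z.
Proof.
apply/funext => x; apply/propext; rewrite /zeros root_prod_XsubC; split.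
  by move=> /mapP[i]; rewrite mem_iota => /andP[_ im] ->; exists i.
by case=> i im ->; apply: map_f; rewrite mem_iota.
Qed.

Lemma consec_between_values a b na nb d :
  increasing_on na a ->
  (forall i, (i.+1 < na)%N ->
     [/\ a i < b (i + d)%N, b (i + d)%N < a i.+1 & (i + d < nb)%N]) ->
  consec_between (values na a) (values nb b).
Proof.
move=> ainc between _ _ [i ina ->] [k kna ->] ai_ak nothing_between.
have ik : (i < k)%N.
  by rewrite ltnNge; apply: contraTN ai_ak => ki; rewrite -leNgt (increasing_on_le ainc).
have ek : k = i.+1.
  apply/eqP; rewrite eqn_leq ik andbT leqNgt; apply/negP => ik1.
  have i1na := ltn_trans ik1 kna.
  apply: (nothing_between (a i.+1)); first by exists i.+1.
  by split; apply: increasing_on_lt ainc _ _.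
subst k; have [lt1 lt2 ind] := between i kna.
by exists (b (i + d)%N); split => //; exists (i + d)%N.
Qed.

Lemma interlaces_values m z y : (0 < m)%N -> interlaced m z y ->
  interlaces (values m.+1 z) (values m y).
Proof.
move=> m_gt0 zy.
have zinc := interlaced_increasing_outer zy.
have yinc := interlaced_increasing_inner zy.
split; last split.
- exists (z 0%N), (y 0%N); split; first by exists 0%N.
  split; first by move=> _ [i im ->]; apply: increasing_on_le zinc _ im.
  split; first by exists 0%N.
  split; first by move=> _ [i im ->]; apply: increasing_on_le yinc _ im.
  by have /andP[] := zy 0%N m_gt0.
- apply: (consec_between_values (d := 0%N) zinc) => i im.
  by rewrite addn0; have /andP[-> ->] := zy i im.
- apply: (consec_between_values (d := 1%N) yinc) => i im.
  rewrite addn1 ltnS (ltnW im); have /andP[_ ->] := zy i (ltnW im).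
  by have /andP[-> _] := zy i.+1 im.
Qed.

Lemma alternating_interlaces P Q m y :
  (0 < m)%N -> increasing_on m y -> size P = m.+2 -> 0 < lead_coef P ->
  (forall i, (i < m)%N -> 0 < (-1) ^+ (m - i) * P.[y i]) ->
  zeros Q = values m y ->
  real_simple_zeros P /\ interlaces (zeros P) (zeros Q).
Proof.
move=> m_gt0 yinc sP lcP ysg ->.
have [z [zy Pz]] := interlacing_roots yinc sP lcP ysg.
split.
  split; first by rewrite -size_poly_gt0 sP.
  by exists (mkseq z m.+1); split=> //; exact/sorted_mkseq/interlaced_increasing_outer/zy.
rewrite {1}Pz zerosZ ?gt_eqF // zeros_prod_XsubC.
exact: interlaces_values.
Qed.

End Interlacing.

Section Laguerre.
Variables (R : realType) (alpha : R).
Hypothesis alpha_gt : -1 < alpha.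
Local Notation L := (hatL alpha).

(* x L_k = L_(k+1) + lag_b k L_k + lag_a k L_(k-1) *)
Definition lag_b (k : nat) : R := 2 * k%:R + alpha + 1.
Definition lag_a (k : nat) : R := k%:R * (k%:R + alpha).

Lemma hatL_pairE k : hatL_pair alpha k = (L k, L k.+1).
Proof. by rewrite /hatL /=; case: (hatL_pair alpha k). Qed.

Lemma hatL0 : L 0 = 1. Proof. by []. Qed.

Lemma hatL1 : L 1 = 'X - (alpha + 1)%:P. Proof. by []. Qed.

Lemma hatLSS k : L k.+2 = ('X - (lag_b k.+1)%:P) * L k.+1 - lag_a k.+1 *: L k.
Proof. by have := hatL_pairE k.+1; rewrite /= hatL_pairE => -[<-]. Qed.

Lemma horner_hatLSS k x :
  (L k.+2).[x] = (x - lag_b k.+1) * (L k.+1).[x] - lag_a k.+1 * (L k).[x].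
Proof. by rewrite hatLSS !hornerE. Qed.

Lemma lag_a_gt0 k : (0 < k)%N -> 0 < lag_a k.
Proof.
move=> k_gt0; have k_ge1 : 1 <= k%:R :> R by rewrite ler1n.
have := alpha_gt; rewrite /lag_a; nra.
Qed.

Lemma size_hatL k : size (L k) = k.+1.
Proof.
elim/ltn_ind: k => -[|[|k]] IH; rewrite ?hatL0 ?hatL1 ?size_poly1 ?size_XsubC //.
have sizeM : size (('X - (lag_b k.+1)%:P) * L k.+1) = k.+3.
  by rewrite size_monicM ?monicXsubC -?size_poly_gt0 ?size_XsubC ?IH.
rewrite hatLSS size_addl sizeM // size_opp.
by rewrite (leq_ltn_trans (size_scale_leq _ _)) // IH.
Qed.

Lemma hatL_monic k : L k \is monic.
Proof.
elim/ltn_ind: k => -[|[|k]] IH; rewrite ?hatL0 ?hatL1 ?monic1 ?monicXsubC //.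
rewrite hatLSS monicE lead_coefDl ?lead_coef_monicM ?monicXsubC ?(monicP (IH _ _)) //.
rewrite size_opp size_monicM ?monicXsubC -?size_poly_gt0 ?size_XsubC ?size_hatL //.
by rewrite (leq_ltn_trans (size_scale_leq _ _)) // size_hatL.
Qed.

Lemma hatL_npos_growth x k : x <= 0 ->
  0 < (-1) ^+ k * (L k).[x] /\
  (k.+1%:R + alpha) * ((-1) ^+ k * (L k).[x]) <= (-1) ^+ k.+1 * (L k.+1).[x].
Proof.
move=> x_le0; have ha := alpha_gt.
elim: k => [|k [pos_k growth_k]]; first by rewrite hatL1 !hornerE; split; lra.
have k_ge0 : 0 <= k%:R :> R := ler0n _ k.
have pos_k1 : 0 < (-1) ^+ k.+1 * (L k.+1).[x].
  by apply: lt_le_trans growth_k; apply: mulr_gt0 pos_k; rewrite -natr1; lra.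
split => //.
have -> : (-1) ^+ k.+2 * (L k.+2).[x] = (lag_b k.+1 - x) * ((-1) ^+ k.+1 * (L k.+1).[x])
                                        - lag_a k.+1 * ((-1) ^+ k * (L k).[x]).
  by rewrite horner_hatLSS !exprS; ring.
move: pos_k growth_k pos_k1; rewrite /lag_b /lag_a -!natr1.
set p0 := _ * (L k).[x]; set p1 := _ * (L k.+1).[x]; nra.
Qed.

Lemma hatL_npos_sign x k : x <= 0 -> 0 < (-1) ^+ k * (L k).[x].
Proof. by move=> x_le0; case: (hatL_npos_growth k x_le0). Qed.

Lemma normr_hatL_npos x k : x <= 0 -> `|(L k).[x]| = (-1) ^+ k * (L k).[x].
Proof.
by move=> x_le0; rewrite -[RHS]gtr0_norm ?hatL_npos_sign // normrM normr_sign mul1r.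
Qed.

Lemma hatL_npos_mono x k j : x <= 0 -> (0 < k <= j)%N ->
  (-1) ^+ k * (L k).[x] <= (-1) ^+ j * (L j).[x].
Proof.
move=> x_le0 /andP[k_gt0]; elim: j => [|j IH]; first by rewrite leqNgt k_gt0.
rewrite leq_eqVlt => /orP[/eqP-> //|kj]; apply: le_trans (IH kj) _.
have [pos_j growth_j] := hatL_npos_growth j x_le0; apply: le_trans growth_j.
have j_ge1 : 1 <= j%:R :> R by rewrite ler1n (leq_trans k_gt0).
by have := alpha_gt; rewrite -natr1; nra.
Qed.

Lemma hatL_large_growth m x : (0 < m)%N -> 4 * m%:R + 2 * alpha - 2 <= x ->
  forall k, (k < m)%N -> 0 < (L k).[x] /\ (k.+1%:R + alpha) * (L k).[x] <= (L k.+1).[x].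
Proof.
move=> m_gt0 x_ge; have ha := alpha_gt; have m_ge1 : 1 <= m%:R :> R by rewrite ler1n.
elim=> [|k IH] km; first by rewrite hatL1 !hornerE; split; lra.
have [pos_k growth_k] := IH (ltnW km).
have k_ge0 : 0 <= k%:R :> R := ler0n _ k.
have pos_k1 : 0 < (L k.+1).[x].
  by apply: lt_le_trans growth_k; apply: mulr_gt0 pos_k; rewrite -natr1; lra.
split => //; have km' : k.+2%:R <= m%:R :> R by rewrite ler_nat.
rewrite horner_hatLSS /lag_b /lag_a; move: pos_k growth_k pos_k1 km'; rewrite -!natr1.
set p0 := (L k).[x]; set p1 := (L k.+1).[x]; nra.
Qed.

Lemma hatL_root_range m y : (0 < m)%N -> root (L m) y ->
  0 < y < 4 * m%:R + 2 * alpha - 2.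
Proof.
move=> m_gt0 /eqP Ly0; apply/andP; split; rewrite ltNge; apply/negP => y_out.
  by have := hatL_npos_sign m y_out; rewrite Ly0 mulr0 ltxx.
case: m m_gt0 Ly0 y_out => // m m_gt0 Ly0 y_out.
have [pos_m growth_m] := hatL_large_growth m_gt0 y_out (ltnSn m).
have := alpha_gt; have := ler0n R m; move: growth_m; rewrite Ly0 -natr1; nra.
Qed.

Lemma hatL_roots m : exists y : nat -> R,
  [/\ increasing_on m y, L m = \prod_(x <- mkseq y m) ('X - x%:P) &
      forall i, (i < m)%N -> 0 < (-1) ^+ (m - i) * (L m.+1).[y i]].
Proof.
elim: m => [|m [y [yinc Ly ysg]]]; first by exists (fun=> 0 : R); split; rewrite ?big_nil.
have lcL : 0 < lead_coef (L m.+1) by rewrite (monicP (hatL_monic _)).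
have [z [zy Lz]] := interlacing_roots yinc (size_hatL m.+1) lcL ysg.
exists z; split; first exact: interlaced_increasing_outer zy.
  by rewrite {1}Lz (monicP (hatL_monic _)) scale1r.
move=> i im; rewrite horner_hatLSS.
have -> : (L m.+1).[z i] = 0.
  by apply/rootP; rewrite {1}Lz rootZ ?root_prod_XsubC ?map_f ?mem_iota ?gt_eqF.
have prod_sign : 0 < (-1) ^+ (m - i) * (L m).[z i].
  rewrite Ly horner_prod_XsubC_mkseq; apply: signr_prod_subr_gt0 => [|j ji|j /andP[ij jm]].
  - by rewrite -ltnS.
  - have /andP[_ yz] := zy j (leq_trans ji (ltnSE im)).
    exact: lt_le_trans yz (increasing_on_le (interlaced_increasing_outer zy) ji im).
  - have /andP[zy_i _] := zy i (leq_ltn_trans ij jm).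
    exact: lt_le_trans zy_i (increasing_on_le yinc ij jm).
rewrite subSn ?(ltnSE im) // exprS.
have := mulr_gt0 (lag_a_gt0 (ltn0Sn m)) prod_sign.
by congr (0 < _); ring.
Qed.

Lemma horner_hatL_at_root k y :
  root (L k.+1) y -> (L k.+2).[y] = - lag_a k.+1 * (L k).[y].
Proof. by move=> /rootP Ly0; rewrite horner_hatLSS Ly0 mulr0 sub0r mulNr. Qed.

Lemma zeros_Lag n : zeros (Lag alpha n) = zeros (L n).
Proof.
rewrite /Lag zerosZ // mulf_neq0 ?signr_eq0 // invr_eq0 pnatr_eq0 -lt0n.
exact: fact_gt0.
Qed.

End Laguerre.

Section Coefficients.
Variable R : realType.

Lemma sum_geomq (c : R) K :
  \sum_(2 <= j < K.+1) c ^+ (j - 2) = geomq c K.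
Proof.
rewrite -{1}[2%N]add0n big_addn (_ : K.+1 - 2 = K.-1)%N; last by lia.
rewrite big_mkord (eq_bigr (fun i : 'I_K.-1 => c ^+ i)) => [|i _]; last by rewrite addnK.
rewrite /geomq; case: eqP => // /eqP c1.
by rewrite subrX1 mulrC mulKf // subr_eq0.
Qed.

Lemma geomq_ge0 (c : R) K : 0 <= c -> 0 <= geomq c K.
Proof. by move=> c_ge0; rewrite -sum_geomq sumr_ge0 // => j _; rewrite exprn_ge0. Qed.

Lemma geomq1 (c : R) : geomq c 1 = 0.
Proof. by rewrite -sum_geomq big_geq. Qed.

Lemma Gamma2_ge0 (gamma : nat -> R) K : 0 <= Gamma2 gamma K.
Proof. by rewrite /Gamma2; elim/big_ind: _ => // x y; rewrite le_max => ->. Qed.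

Lemma le_Gamma2 (gamma : nat -> R) K j : (2 <= j <= K)%N -> `|gamma j| <= Gamma2 gamma K.
Proof.
move=> jK; rewrite /Gamma2.
apply: (@le_bigmax_seq _ _ _ _ 0 j xpredT (fun j => `|gamma j|)) => //.
by rewrite mem_index_iota ltnS.
Qed.

End Coefficients.

Section LagComb.
Variables (R : realType) (alpha nu : R) (rho gamma : nat -> R) (K : nat).
Hypothesis alpha_gt : -1 < alpha.
Hypothesis nu_gt0 : 0 < nu.
Hypothesis rho_gt0 : forall n, 0 < rho n.
Hypothesis rho_ratio : forall n, (1 <= n)%N -> rho n.-1 / rho n <= nu.
Hypothesis gamma0 : gamma 0%N = 1.
Local Notation L := (hatL alpha).
Local Notation q := (lag_comb alpha rho gamma K).

Definition lag_comb_tail n : {poly R} :=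
  \sum_(1 <= j < K.+1) (gamma j * rho (n - j)%N) *: L (n - j)%N.

Lemma lag_combE n : q n = rho n *: L n + lag_comb_tail n.
Proof. by rewrite /lag_comb big_ltn // subn0 gamma0 mul1r. Qed.

Lemma size_lag_comb_tail n : (K <= n)%N -> (size (lag_comb_tail n) <= n)%N.
Proof.
move=> Kn; rewrite /lag_comb_tail big_nat_cond.
elim/big_ind: _ => [|p p' sp sp'|j /andP[/andP[j_ge1 jK] _]]; first by rewrite size_poly0.
  by rewrite (leq_trans (size_add _ _)) // geq_max sp sp'.
apply: leq_trans (size_scale_leq _ _) _.
by rewrite size_hatL; lia.
Qed.

Lemma size_lag_comb n : (K <= n)%N -> size (q n) = n.+1.
Proof.
move=> Kn; rewrite lag_combE size_addl size_scale ?size_hatL ?gt_eqF //.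
by rewrite ltnS size_lag_comb_tail.
Qed.

Lemma lead_coef_lag_comb n : (K <= n)%N -> lead_coef (q n) = rho n.
Proof.
move=> Kn; rewrite lag_combE lead_coefDl ?lead_coefZ ?(monicP (hatL_monic _ _)) ?mulr1 //.
by rewrite size_scale ?size_hatL ?gt_eqF // ltnS size_lag_comb_tail.
Qed.

Lemma rho_sub_le n j : (j <= n)%N -> rho (n - j) <= nu ^+ j * rho n.
Proof.
elim: j => [|j IH] jn; first by rewrite subn0 expr0 mul1r.
have := rho_ratio (n := n - j) ltac:(lia).
rewrite (_ : (n - j).-1 = n - j.+1)%N; last by lia.
rewrite ler_pdivrMr // => /le_trans; apply; rewrite exprS -mulrA.
by rewrite ler_pM2l // IH // ltnW.
Qed.

Lemma lag_comb_tail_npos_le n x : (K < n)%N -> x <= 0 ->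
  `|(lag_comb_tail n).[x]| <=
    (\sum_(1 <= j < K.+1) `|gamma j| * nu ^+ j) * rho n * ((-1) ^+ n.-1 * (L n.-1).[x]).
Proof.
move=> Kn x_le0; rewrite /lag_comb_tail horner_sum !mulr_suml.
apply: le_trans (ler_norm_sum _ _ _) _; apply: ler_sum_nat => j /andP[j_ge1 jK].
rewrite hornerZ !normrM (gtr0_norm (rho_gt0 _)) -!mulrA ler_wpM2l // [X in _ <= X]mulrA.
rewrite normr_hatL_npos //.
apply: ler_pM; rewrite ?(ltW (rho_gt0 _)) ?(ltW (hatL_npos_sign _ _ _)) //.
  by apply: rho_sub_le; lia.
by apply: hatL_npos_mono => //; lia.
Qed.

Lemma lag_comb_roots_eventually_pos :
  exists N, forall n, (N <= n)%N -> forall x, root (q n) x -> 0 < x.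
Proof.
pose C := \sum_(1 <= j < K.+1) `|gamma j| * nu ^+ j.
have C_ge0 : 0 <= C + `|alpha|.
  by rewrite addr_ge0 // sumr_ge0 // => j _; rewrite mulr_ge0 // exprn_ge0 // ltW.
exists (maxn K.+1 (Num.Def.archi_bound (C + `|alpha|))) => n.
rewrite geq_max => /andP[Kn n_ge] x /rootP qx0; rewrite ltNge; apply/negP => x_le0.
have n_gt0 : (0 < n)%N by apply: leq_trans Kn.
have C_lt : C < n%:R + alpha.
  have := archi_boundP C_ge0; rewrite -(ler_nat R) in n_ge.
  have := lerNnormlW (lexx `|alpha|); lra.
have [Pn1_gt0 growth] := hatL_npos_growth alpha_gt n.-1 x_le0.
rewrite prednK // in growth.
have tail_eq : `|(lag_comb_tail n).[x]| = rho n * ((-1) ^+ n * (L n).[x]).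
  move: qx0; rewrite lag_combE hornerD hornerZ => /eqP; rewrite addrC addr_eq0 => /eqP->.
  by rewrite normrN normrM (gtr0_norm (rho_gt0 _)) normr_hatL_npos.
have := lag_comb_tail_npos_le Kn x_le0; rewrite -/C tail_eq.
have slack : 0 < (n%:R + alpha - C) * (rho n * ((-1) ^+ n.-1 * (L n.-1).[x])).
  by apply: mulr_gt0; [lra | exact: mulr_gt0].
have := ler_wpM2l (ltW (rho_gt0 n)) growth; nra.
Qed.

Section LargeIndex.
Hypothesis K_gt0 : (0 < K)%N.
Variable n : nat.
Hypothesis n_ge_Gamma2 :
  8^-1 * (23 * nu * 2 ^+ K.-1 * geomq (23 * nu) K * Gamma2 gamma K - 2 * `|alpha|) <= n%:R.
Hypothesis n_ge_nu : (nu - alpha + 1) / 2 <= n%:R.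
Hypothesis n_ge_alpha : alpha + 9 <= n%:R.
Hypothesis n_ge_2K : (2 * K <= n)%N.

Lemma large_index_gt8 : (8 < n)%N.
Proof. by rewrite -(ltr_nat R); have := alpha_gt; have := n_ge_alpha; lra. Qed.

Lemma natr_pred_large_index : n.-1%:R = n%:R - 1 :> R.
Proof. by rewrite -subn1 natrB // ltnW // (ltn_trans _ large_index_gt8). Qed.

Lemma lag_b_dist_le m y : (n + 2 <= 2 * m)%N -> root (L n.-1) y ->
  `|y - lag_b alpha m| + 1 <= 23 * lag_a alpha m.
Proof.
move=> nm r; have ha := alpha_gt; have n8 := large_index_gt8.
have /andP[y_gt0] := hatL_root_range alpha_gt (ltac:(lia) : (0 < n.-1)%N) r.
rewrite natr_pred_large_index /lag_b /lag_a => y_lt.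
have := nm; rewrite -(ler_nat R) natrD natrM => nm'.
have := n8; rewrite -(ltr_nat R) => n8'.
have [y_ge|y_lt'] := lerP 0 (y - (2 * m%:R + alpha + 1)).
  by rewrite ger0_norm //; nra.
by rewrite ltr0_norm //; nra.
Qed.

Lemma hatL_at_root_le y : root (L n.-1) y -> forall i, (i.+2 <= K)%N ->
  `|(L (n - i.+2)).[y]| <= 23 ^+ i * `|(L (n - 2)).[y]|.
Proof.
move=> r; set M := `|_|.
suff growth i : (i.+2 <= K)%N ->
    `|(L (n - i.+2)).[y]| <= 23 ^+ i * M /\ `|(L (n - i.+1)).[y]| <= 23 ^+ i * M.
  by move=> i /growth[].
elim: i => [|i IH] iK.
  by rewrite expr0 mul1r subn1 (rootP r) normr0 lexx normr_ge0.
have [le_i2 le_i1] := IH (ltnW iK).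
have t_ge0 : 0 <= 23 ^+ i * M by rewrite mulr_ge0 ?exprn_ge0 ?normr_ge0.
split; last by apply: le_trans le_i2 _; rewrite exprS -mulrA ler_peMl //; lra.
have n_gt8 := large_index_gt8.
have [k [ek0 ek1 ek2 km]] : exists k, [/\ (n - i.+3 = k)%N, (n - i.+2 = k.+1)%N,
    (n - i.+1 = k.+2)%N & (n + 2 <= 2 * k.+1)%N].
  by exists (n - i.+3)%N; split; clear -n_gt8 n_ge_2K iK; lia.
rewrite ek0; rewrite ek1 in le_i2; rewrite ek2 in le_i1.
have a_gt0 := lag_a_gt0 alpha_gt (ltn0Sn k).
have dist := lag_b_dist_le km r.
rewrite -(ler_pM2l a_gt0) -{1}(gtr0_norm a_gt0) -normrM.
have -> : lag_a alpha k.+1 * (L k).[y] = (y - lag_b alpha k.+1) * (L k.+1).[y] - (L k.+2).[y].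
  by rewrite horner_hatLSS; ring.
apply: le_trans (ler_normB _ _) _; rewrite normrM exprS -mulrA.
move: le_i2 le_i1 dist t_ge0 (normr_ge0 (y - lag_b alpha k.+1)); nra.
Qed.

Lemma lag_comb_tail_at_root_le y : root (L n.-1) y ->
  `|(lag_comb_tail n).[y]| <=
    Gamma2 gamma K * nu ^+ 2 * geomq (23 * nu) K * (rho n * `|(L (n - 2)).[y]|).
Proof.
move=> r; rewrite /lag_comb_tail horner_sum big_ltn ?ltnS // hornerZ subn1 (rootP r).
rewrite mulr0 add0r -sum_geomq mulr_sumr mulr_suml.
apply: le_trans (ler_norm_sum _ _ _) _; apply: ler_sum_nat => j /andP[j_ge2 jK].
have /(hatL_at_root_le r) : ((j - 2).+2 <= K)%N by lia.
rewrite (_ : (j - 2).+2 = j)%N; last by lia.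
set M := `|(L (n - 2)).[y]| => Lj_le.
rewrite hornerZ !normrM (gtr0_norm (rho_gt0 _)).
have -> : Gamma2 gamma K * nu ^+ 2 * (23 * nu) ^+ (j - 2) * (rho n * M) =
          Gamma2 gamma K * (nu ^+ j * rho n) * (23 ^+ (j - 2) * M).
  by rewrite -(subnKC j_ge2) exprD addKn exprMn; ring.
apply: ler_pM; rewrite ?mulr_ge0 ?normr_ge0 ?(ltW (rho_gt0 _)) //.
apply: ler_pM; rewrite ?normr_ge0 ?(ltW (rho_gt0 _)) ?le_Gamma2 ?j_ge2 //.
by apply: rho_sub_le; lia.
Qed.

Lemma threshold_lt_lag_a : Gamma2 gamma K * nu ^+ 2 * geomq (23 * nu) K < lag_a alpha n.-1.
Proof.
have ha := alpha_gt; have n_gt8 := large_index_gt8.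
have [->|K_ge2] := eqVneq K 1%N.
  by rewrite geomq1 mulr0 lag_a_gt0 //; lia.
rewrite /lag_a natr_pred_large_index.
set X := nu * geomq (23 * nu) K * Gamma2 gamma K.
have X_ge0 : 0 <= X.
  by rewrite !mulr_ge0 ?geomq_ge0 ?Gamma2_ge0 ?mulr_ge0 // ltW.
have pow2_ge2 : 2 <= 2 ^+ K.-1 :> R.
  rewrite -[K.-1]prednK ?exprS; last by lia.
  by rewrite ler_pMr // exprn_ege1 // ler1n.
have X_le : 46 * X <= 8 * n%:R + 2 * `|alpha|.
  have := n_ge_Gamma2; rewrite (_ : 23 * nu * _ * _ * _ = 23 * 2 ^+ K.-1 * X); last first.
    by rewrite /X; ring.
  by have := ler_wpM2r X_ge0 pow2_ge2; nra.
have nu_le : nu <= 2 * n%:R + alpha - 1 by have := n_ge_nu; lra.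
have n_ge9 : 9 <= n%:R :> R by rewrite (ler_nat R 9 n).
rewrite (_ : _ * _ * _ = nu * X); last by rewrite /X; ring.
apply: le_lt_trans (ler_wpM2r X_ge0 nu_le) _.
have := n_ge_alpha; have [a_ge0|a_lt0] := lerP 0 alpha.
  by rewrite ger0_norm // in X_le; nra.
by rewrite ltr0_norm // in X_le; nra.
Qed.

Lemma lag_comb_sign_at_root y k : root (L n.-1) y ->
  0 < (-1) ^+ k * (L n).[y] -> 0 < (-1) ^+ k * (q n).[y].
Proof.
move=> r sgn; apply: (signrM_gt0_approx (c := rho n) sgn).
rewrite lag_combE hornerD hornerZ addrAC subrr add0r.
have n_gt8 := large_index_gt8.
have Ln : (L n).[y] = - lag_a alpha n.-1 * (L (n - 2)).[y].
  have e1 : (n - 2).+1 = n.-1 by lia.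
  have e2 : (n - 2).+2 = n by lia.
  by rewrite -e1 in r *; rewrite -{1}e2 horner_hatL_at_root.
have a_gt0 : 0 < lag_a alpha n.-1 by rewrite lag_a_gt0 //; lia.
have M_gt0 : 0 < `|(L (n - 2)).[y]|.
  by rewrite normr_gt0; apply: contraTneq sgn; rewrite Ln => ->; rewrite !mulr0 ltxx.
apply: le_lt_trans (lag_comb_tail_at_root_le r) _.
rewrite Ln normrM normrN (gtr0_norm a_gt0) [X in _ < X]mulrCA ltr_pM2r ?mulr_gt0 //.
exact: threshold_lt_lag_a.
Qed.

Lemma lag_comb_real_simple_interlacing :
  real_simple_zeros (q n) /\ interlaces (zeros (q n)) (zeros (Lag alpha n.-1)).
Proof.
have n_gt8 := large_index_gt8.
have [y [yinc Ly ysg]] := hatL_roots alpha_gt n.-1.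
rewrite prednK in ysg; last by lia.
have Kn : (K <= n)%N by lia.
apply: (alternating_interlaces (m := n.-1) (y := y)) => //.
- by lia.
- by rewrite size_lag_comb //; lia.
- by rewrite lead_coef_lag_comb.
- move=> i i_lt; apply: lag_comb_sign_at_root (ysg i i_lt).
  by rewrite Ly root_prod_XsubC map_f // mem_iota.
- by rewrite zeros_Lag Ly zeros_prod_XsubC.
Qed.

End LargeIndex.

End LagComb.

Theorem mainTheorem7 (R : realType) (alpha nu : R) (rho gamma : nat -> R) (K : nat) :
  -1 < alpha ->
  0 < nu ->
  (forall n, 0 < rho n) ->
  (forall n, (1 <= n)%N -> rho n.-1 / rho n <= nu) ->
  (0 < K)%N ->
  gamma 0%N = 1 ->
  gamma K != 0 ->
  (forall n : nat,
     (8^-1 * (23 * nu * 2 ^+ K.-1 * geomq (23 * nu) K * Gamma2 gamma K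
              - 2 * `|alpha|) <= n%:R) ->
     ((nu - alpha + 1) / 2 <= n%:R) ->
     (alpha + 9 <= n%:R) ->
     (2 * K <= n)%N ->
     real_simple_zeros (lag_comb alpha rho gamma K n) /\
     interlaces (zeros (lag_comb alpha rho gamma K n)) (zeros (Lag alpha n.-1)))
  /\
  (exists N : nat, forall n : nat, (N <= n)%N ->
     forall x : R, root (lag_comb alpha rho gamma K n) x -> 0 < x).
Proof.
(* The hypothesis gamma_K != 0 only pins down K; the argument does not need it. *)
move=> alpha_gt nu_gt0 rho_gt0 rho_ratio K_gt0 gamma0 _.
split; first by move=> n; apply: lag_comb_real_simple_interlacing.
exact: (lag_comb_roots_eventually_pos K alpha_gt nu_gt0 rho_gt0 rho_ratio gamma0).
Qed.
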